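(* Let $G$ be a connected graph of order $n \ge 2$, and let $k$ be a positive integer. Then $\dim_{k,f}(G)=\frac{n}{2}$ if and only if $G \in H[\mathcal{K} \cup \overline{\mathcal{K}}]$ for some connected graph $H$.
   Context: All graphs are finite, simple, undirected and connected. $d(x,y)$ is the length of a shortest $x$–$y$ path in $G$. For a positive integer $k$, $d_k(x,y)=\min\{d(x,y),k+1\}$ and $R_k\{x,y\}=\{z\in V(G): d_k(x,z)\neq d_k(y,z)\}$. For a function $g$ on $V(G)$ and $U\subseteq V(G)$, $g(U)=\sum_{s\in U}g(s)$. A function $h:V(G)\to[0,1]$ is a $k$-truncated resolving function of $G$ if $h(R_k\{x,y\})\ge 1$ for all distinct $x,y\in V(G)$; $\dim_{k,f}(G)$ is the minimum of $h(V(G))$ over all such $h$. Let $\mathcal{K}=\{K_a: a\ge 2\}$ and $\overline{\mathcal{K}}=\{\overline{K}_b: b\ge 2\}$. For a connected graph $H$, $H[\mathcal{K}\cup\overline{\mathcal{K}}]$ is the family of graphs obtained from $H$ by replacing each vertex $u_i\in V(H)$ by a graph $H_i\in\mathcal{K}\cup\overline{\mathcal{K}}$, where each vertex of $H_i$ is adjacent to each vertex of $H_j$ ($i\neq j$) if and only if $u_iu_j\in E(H)$. *)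

From mathcomp Require Import all_boot all_order all_algebra.
Set Implicit Arguments. Unset Strict Implicit. Unset Printing Implicit Defensive.
Import Order.TTheory GRing.Theory Num.Theory.

Section Graphs.
Variable T : finType.
Variable e : rel T.

Definition simple_graph := symmetric e /\ irreflexive e.
Definition connected_graph := forall x y : T, connect e x y.

Fixpoint walkn (m : nat) (x y : T) : bool :=
  if m is m'.+1 then [exists z, e x z && walkn m' z y] else x == y.

(* d(x,y): least m with a walk (equivalently a path) of length m from x to y;
   in a connected graph on #|T| vertices this is < #|T|. *)
Definition dist (x y : T) : nat := find (fun m => walkn m x y) (iota 0 #|T|).

Definition distk (k : nat) (x y : T) : nat := minn (dist x y) k.+1.

Definition Rk (k : nat) (x y : T) : {set T} :=
  [set z | distk k x z != distk k y z].

Variable R : realFieldType.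

Definition k_trunc_resolving (k : nat) (h : T -> R) : Prop :=
  (forall z, 0 <= h z <= 1)%R /\
  forall x y, x != y -> (1 <= \sum_(z in Rk k x y) h z)%R.

Definition is_dim_kf (k : nat) (r : R) : Prop :=
  (exists h, k_trunc_resolving k h /\ (\sum_(z : T) h z)%R = r) /\
  (forall h, k_trunc_resolving k h -> (r <= \sum_(z : T) h z)%R).
End Graphs.

(* G (on T with adjacency e) belongs to H[K ∪ K̄] for some connected graph H:
   vertices of G are partitioned by f into blocks f^-1(u), u in V(H), each of
   size >= 2, each block is a clique (b u = true) or independent (b u = false),
   and distinct blocks are completely joined iff adjacent in H. *)
Definition in_blowup_family (T : finType) (e : rel T) : Prop :=
  exists (U : finType) (eH : rel U) (f : T -> U) (b : U -> bool),
    simple_graph eH /\ connected_graph eH /\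
    (forall u : U, 2 <= #|[set x | f x == u]|)%N /\
    (forall x y : T, x != y ->
        e x y = (if f x == f y then b (f x) else eH (f x) (f y))).

(* Call x and y twins when they have the same neighbours outside {x, y}.  No
   third vertex tells twins apart by its distance to them, so R_k{x,y} = {x,y};
   conversely, for k >= 1, R_k{x,y} = {x,y} forces x and y to be twins, since
   d_k still detects adjacency.
   If G is a blow-up, two vertices of one block are twins, so a resolving
   function puts weight >= 1 on each such pair, hence at least half its size on
   each block (of size >= 2): dim_{k,f}(G) = n/2, attained by the constant 1/2.
   If some vertex v has no twin, every R_k{x,y} contains two vertices other
   than v, so the weight 0 at v and 1/2 elsewhere is resolving and
   dim_{k,f}(G) <= (n-1)/2.  Otherwise G is the blow-up of its quotient by
   twinship, each twin class being a clique or an independent set. *)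

From HB Require Import structures.
From mathcomp Require Import all_boot all_order all_algebra generic_quotient.
From mathcomp Require Import zify lra.
Local Open Scope quotient_scope.
Set Implicit Arguments. Unset Strict Implicit. Unset Printing Implicit Defensive.
Import Order.TTheory GRing.Theory Num.Theory.

Section Distance.
Variables (T : finType) (e : rel T).

Lemma dist_le_walkn m x y : (m < #|T|)%N -> walkn e m x y -> (dist e x y <= m)%N.
Proof.
move=> ltm wm; rewrite /dist leqNgt; apply/negP => /(before_find 0).
by rewrite nth_iota // add0n wm.
Qed.

Lemma walkn_dist x y : (dist e x y < #|T|)%N -> walkn e (dist e x y) x y.
Proof.
move=> lt; have := @nth_find _ 0 (fun m => walkn e m x y) (iota 0 #|T|).
by rewrite has_find size_iota nth_iota // add0n; apply.
Qed.

Lemma dist_le_card x y : (dist e x y <= #|T|)%N.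
Proof. by rewrite /dist -[X in (_ <= X)%N](size_iota 0) find_size. Qed.

Lemma dist_eq0 x y : (dist e x y == 0%N) = (x == y).
Proof.
have T0 : (0 < #|T|)%N by apply/card_gt0P; exists x.
apply/eqP/eqP => [d0|<-]; last first.
  by apply/eqP; rewrite -leqn0 dist_le_walkn //=.
by have := @walkn_dist x y; rewrite d0 => /(_ T0)/eqP.
Qed.

Lemma dist_eq1 x y : x != y -> (dist e x y == 1%N) = e x y.
Proof.
move=> nxy; have T2 : (1 < #|T|)%N by have := max_card [set x; y]; rewrite cards2 nxy.
apply/eqP/idP => [d1|exy].
  by have := @walkn_dist x y; rewrite d1 => /(_ T2) /existsP[z /andP[exz /eqP <-]].
have : (dist e x y <= 1)%N.
  by apply: dist_le_walkn => //=; apply/existsP; exists y; rewrite exy eqxx.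
by move: (dist_eq0 x y); rewrite (negbTE nxy); lia.
Qed.

End Distance.

Section Twins.
Variables (T : finType) (e : rel T).
Hypotheses (esym : symmetric e) (eirr : irreflexive e).

Definition twins x y := [forall w, (w != x) ==> (w != y) ==> (e x w == e y w)].

Lemma twinsP x y :
  reflect (forall w, w != x -> w != y -> e x w = e y w) (twins x y).
Proof.
apply: (iffP forallP) => [tw w wx wy | tw w].
  by move: (tw w); rewrite wx wy => /eqP.
by apply/implyP => wx; apply/implyP => wy; apply/eqP; apply: tw.
Qed.

Lemma twins_refl : reflexive twins.
Proof. by move=> x; apply/twinsP. Qed.

Lemma twins_sym : symmetric twins.
Proof.
suff tw_sym x y : twins x y -> twins y x by move=> x y; apply/idP/idP; apply: tw_sym.
by move/twinsP => tw; apply/twinsP => w wy wx; rewrite tw.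
Qed.

Lemma twins_trans : transitive twins.
Proof.
move=> y x z /twinsP txy /twinsP tyz.
have [<-|nxz] := eqVneq x z; first exact: twins_refl.
have [exy|nxy] := eqVneq x y; first by subst; apply/twinsP.
have [eyz|nyz] := eqVneq y z; first by subst; apply/twinsP.
apply/twinsP => w wx wz; have [->|wy] := eqVneq w y; last by rewrite txy // tyz.
have eyx : e y x = e z x by apply: tyz; rewrite // eq_sym.
have exz : e x z = e y z by apply: txy; rewrite // eq_sym.
by rewrite (esym x y) eyx (esym z x) exz; apply: esym.
Qed.

Lemma twins_dist_le x y z : twins x y -> z != x -> (dist e y z <= dist e x z)%N.
Proof.
move=> /twinsP txy zx; have [lt|] := ltnP (dist e x z) #|T|; last first.
  exact: leq_trans (dist_le_card e y z).
move: (walkn_dist lt); case Ed: (dist e x z) lt => [|m] lt /=.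
  by rewrite eq_sym (negbTE zx).
case/existsP => w /andP[exw wz]; have ltm := ltnW lt.
have [wy|nwy] := eqVneq w y; first by subst w; rewrite ltnW // ltnS dist_le_walkn.
apply: dist_le_walkn => //=; apply/existsP; exists w; rewrite wz andbT -txy //.
by apply: contraTneq exw => ->; rewrite eirr.
Qed.

Lemma twins_dist x y z : twins x y -> z != x -> z != y -> dist e x z = dist e y z.
Proof.
move=> txy zx zy; apply/eqP; rewrite eqn_leq !twins_dist_le //.
by rewrite twins_sym.
Qed.

Lemma Rk_sym k x y : Rk e k x y = Rk e k y x.
Proof. by apply/setP => z; rewrite !inE eq_sym. Qed.

Lemma mem_Rk_l k x y : x != y -> x \in Rk e k x y.
Proof.
rewrite eq_sym => nyx; rewrite inE /distk.
by move: (dist_eq0 e x x) (dist_eq0 e y x); rewrite eqxx (negbTE nyx); lia.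
Qed.

Lemma mem_Rk_r k x y : x != y -> y \in Rk e k x y.
Proof. by rewrite Rk_sym eq_sym; apply: mem_Rk_l. Qed.

Lemma Rk_twins k x y : x != y -> twins x y -> Rk e k x y = [set x; y].
Proof.
move=> nxy txy; apply/setP => z; rewrite in_set2.
have [->|zx] := eqVneq z x; first by rewrite mem_Rk_l.
have [->|zy] := eqVneq z y; first by rewrite mem_Rk_r.
by rewrite inE /distk (twins_dist txy zx zy) eqxx.
Qed.

Lemma Rk_subset_twins k x y :
  (0 < k)%N -> Rk e k x y \subset [set x; y] -> twins x y.
Proof.
move=> k0 /subsetP sub; apply/twinsP => w wx wy.
have : w \notin Rk e k x y.
  by apply/negP => /sub; rewrite in_set2 (negbTE wx) (negbTE wy).
rewrite inE negbK /distk => /eqP dk.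
rewrite -(@dist_eq1 _ e x w) 1?eq_sym // -(@dist_eq1 _ e y w) 1?eq_sym //.
by apply/eqP/eqP; lia.
Qed.

Lemma no_twin_Rk_pair k v x y :
  (0 < k)%N -> (forall y, y != v -> ~~ twins v y) -> x != y ->
  exists a b, [/\ a != b, a != v, b != v, a \in Rk e k x y & b \in Rk e k x y].
Proof.
move=> k0 lonely; wlog yv : x y / y != v => [gen nxy|nxy].
  have [yv|yv] := eqVneq y v; last exact: gen.
  by subst y; rewrite Rk_sym; apply: gen; rewrite // eq_sym.
have [xv|xv] := eqVneq x v; last by exists x, y; rewrite mem_Rk_l ?mem_Rk_r.
subst x; have /subsetPn[z zR] : ~~ (Rk e k v y \subset [set v; y]).
  by apply: contra (lonely y yv); apply: Rk_subset_twins.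
rewrite in_set2 negb_or => /andP[zv zy].
by exists y, z; rewrite eq_sym zy yv zv mem_Rk_r.
Qed.

Lemma twins_edge_class x y z w :
  twins x y -> twins x z -> twins x w -> x != y -> z != w -> e x y = e z w.
Proof.
move=> txy txz txw nxy nzw.
have tyw : twins y w by rewrite twins_sym in txy; apply: twins_trans txy txw.
have [ezy|nzy] := eqVneq z y.
  by subst z; rewrite (esym y w); apply: (twinsP _ _ txw); rewrite // eq_sym.
by rewrite (twinsP _ _ txz y) 1?eq_sym // (esym z y) (twinsP _ _ tyw z).
Qed.

Lemma twins_edge_cross x y x' y' :
  ~~ twins x y -> twins x x' -> twins y y' -> e x y = e x' y'.
Proof.
move=> ntxy txx' tyy'.
have ntx'y : ~~ twins x' y by apply: contra ntxy; apply: twins_trans txx'.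
have ntx'y' : ~~ twins x' y'.
  apply: contra ntx'y => tx'y'; rewrite twins_sym in tyy'.
  exact: twins_trans tx'y' tyy'.
have neq u v : ~~ twins u v -> u != v.
  by move=> ntuv; apply: contraNneq ntuv => ->; apply: twins_refl.
have exy : e x y = e x' y by apply: (twinsP _ _ txx'); rewrite eq_sym neq.
have eyx' : e y x' = e y' x' by apply: (twinsP _ _ tyy'); apply: neq.
by rewrite exy (esym x' y) eyx' (esym y').
Qed.

Definition twins_equiv : equiv_rel T :=
  EquivRel twins twins_refl twins_sym twins_trans.

Definition twin_class := {eq_quot twins_equiv}.
HB.instance Definition _ := [Finite of twin_class by <:%/].

Local Notation cls := \pi_twin_class.

Lemma cls_eqP x y : reflect (cls x = cls y) (twins x y).
Proof. exact: eqmodP. Qed.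

Lemma cls_eq x y : (cls x == cls y :> twin_class) = twins x y.
Proof. by apply/eqP/idP => /cls_eqP. Qed.

Lemma twins_repr x : twins x (repr (cls x)).
Proof. by apply/cls_eqP; rewrite reprK. Qed.

Definition twin_quotient_edge (u v : twin_class) := (u != v) && e (repr u) (repr v).

Definition twin_class_clique (u : twin_class) :=
  [exists x, exists y, [&& cls x == u, cls y == u, x != y & e x y]].

Lemma twin_quotient_edgeE x y :
  ~~ twins x y -> twin_quotient_edge (cls x) (cls y) = e x y.
Proof.
move=> ntxy; rewrite /twin_quotient_edge cls_eq ntxy /=.
by rewrite (twins_edge_cross ntxy (twins_repr x) (twins_repr y)).
Qed.

Lemma connect_twin_quotient x y :
  connect e x y -> connect twin_quotient_edge (cls x) (cls y).
Proof.
move/connectP => [p pth ->]; elim: p x pth => [|z p IH] x /=; first by rewrite connect0.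
case/andP => exz pth; apply: connect_trans (IH _ pth).
have [txz|ntxz] := boolP (twins x z); first by rewrite (cls_eqP _ _ txz) connect0.
by apply: connect1; rewrite twin_quotient_edgeE.
Qed.

Lemma twin_class_cliqueE x y : x != y -> twins x y -> twin_class_clique (cls x) = e x y.
Proof.
move=> nxy txy; apply/existsP/idP => [[x' /existsP[y' /and4P[]]]|exy].
  move=> /eqP px' /eqP py' nx'y' ex'y'.
  have tw z : cls z = cls x -> twins x z by move=> pz; apply/cls_eqP; rewrite pz.
  by rewrite (@twins_edge_class x y x' y') //; apply: tw.
by exists x; apply/existsP; exists y; rewrite eqxx (cls_eqP _ _ txy) eqxx nxy exy.
Qed.

Lemma twins_blowup :
  connected_graph e -> (forall x, exists2 y, y != x & twins x y) -> in_blowup_family e.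
Proof.
move=> conn has_twin; exists twin_class, twin_quotient_edge, cls, twin_class_clique.
split; [split|split; [|split]].
- by move=> u v; rewrite /twin_quotient_edge eq_sym esym.
- by move=> u; rewrite /twin_quotient_edge eqxx.
- by move=> u v; rewrite -[u]reprK -[v]reprK; apply: connect_twin_quotient.
- move=> u; have [y yx txy] := has_twin (repr u).
  have sub : [set repr u; y] \subset [set x | cls x == u :> twin_class].
    apply/subsetP => z; rewrite in_set2 inE => /orP[] /eqP ->; rewrite ?reprK //.
    by rewrite -[X in _ == X]reprK cls_eq twins_sym.
  by have := subset_leq_card sub; rewrite cards2 eq_sym yx.
move=> x y nxy; rewrite cls_eq; case: ifP => [txy|/negbT ntxy].
  by rewrite (twin_class_cliqueE nxy txy).
by rewrite (twin_quotient_edgeE ntxy).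
Qed.

End Twins.

Local Open Scope ring_scope.

Section WeightSums.
Variables (R : realFieldType) (T : finType).
Implicit Types (h : T -> R) (A : {set T}).

Lemma ler_pair_sum h A x y : (forall z, 0 <= h z) -> x != y -> x \in A -> y \in A ->
  h x + h y <= \sum_(z in A) h z.
Proof.
move=> h0 nxy xA yA; rewrite (bigD1 x) //= (bigD1 y) /=; last by rewrite yA eq_sym.
by rewrite addrA lerDl sumr_ge0.
Qed.

(* If some weight is below 1/2, all others are above 1/2 and compensate it. *)
Lemma half_card_le_sum h A : (1 < #|A|)%N ->
  {in A &, forall x y, x != y -> 1 <= h x + h y} -> #|A|%:R / 2 <= \sum_(x in A) h x.
Proof.
move=> A2 pair; suff : 0 <= \sum_(x in A) (h x - 2^-1).
  by rewrite sumrB sumr_const -mulr_natr; lra.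
case: (pickP [pred a in A | h a < 2^-1]) => [a /andP[aA ha]|big]; last first.
  apply: sumr_ge0 => x xA; rewrite subr_ge0 leNgt.
  by move: (big x); rewrite inE xA => /negbT.
have [c cA ca] : exists2 c, c \in A & c != a.
  have : (0 < #|A :\ a|)%N by rewrite (cardsD1 a) aA in A2.
  by case/card_gt0P => c; rewrite !inE => /andP[ca cA]; exists c.
rewrite (bigD1 a) //= (bigD1 c) /=; last by rewrite cA.
have hac : 1 <= h a + h c by apply: pair; rewrite // eq_sym.
have : 0 <= \sum_(i | (i \in A) && (i != a) && (i != c)) (h i - 2^-1).
  apply: sumr_ge0 => i /andP[/andP[iA ia] _].
  have := pair a i aA iA; rewrite eq_sym => /(_ ia); lra.
lra.
Qed.

Lemma half_card_le_sum_fibres (U : finType) (f : T -> U) h :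
  (forall u, 2 <= #|[set x | f x == u]|)%N ->
  (forall x y, x != y -> f x = f y -> 1 <= h x + h y) ->
  #|T|%:R / 2 <= \sum_x h x.
Proof.
move=> fib2 pair; rewrite (partition_big f predT) //=.
have -> : #|T| = (\sum_u #|[set x | f x == u]|)%N.
  rewrite -sum1_card (partition_big f predT) //=; apply: eq_bigr => u _.
  by rewrite -sum1_card; apply: eq_bigl => x; rewrite inE.
rewrite natr_sum mulr_suml; apply: ler_sum => u _.
have -> : \sum_(x | f x == u) h x = \sum_(x in [set x | f x == u]) h x.
  by apply: eq_bigl => x; rewrite inE.
apply: half_card_le_sum => // x y; rewrite !inE => /eqP fx /eqP fy nxy.
by apply: pair; rewrite // fx fy.
Qed.

End WeightSums.

Section Resolving.
Variables (R : realFieldType) (T : finType) (e : rel T) (k : nat).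
Hypothesis eirr : irreflexive e.

Lemma twins_resolving_ge1 (h : T -> R) x y :
  k_trunc_resolving e k h -> x != y -> twins e x y -> 1 <= h x + h y.
Proof.
move=> [_ hR] nxy txy; have := hR x y nxy.
by rewrite Rk_twins // big_setU1 ?big_set1 ?inE.
Qed.

Lemma half_k_trunc_resolving : k_trunc_resolving e k (fun=> 2^-1 : R).
Proof.
split=> [z|x y nxy]; first by apply/andP; split; lra.
have half_ge0 : 0 <= 2^-1 :> R by lra.
have := ler_pair_sum (h := fun=> 2^-1) (fun=> half_ge0) nxy.
by move/(_ _ (mem_Rk_l e k nxy) (mem_Rk_r e k nxy)); lra.
Qed.

Lemma no_twin_resolving_lt v : (0 < k)%N -> (forall y, y != v -> ~~ twins e v y) ->
  exists2 h : T -> R, k_trunc_resolving e k h & \sum_z h z < #|T|%:R / 2.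
Proof.
move=> k0 lonely; pose h z : R := if z == v then 0 else 2^-1.
have h0 z : 0 <= h z by rewrite /h; case: ifP => _; lra.
have hv z : z != v -> h z = 2^-1 by rewrite /h => /negbTE ->.
exists h.
  split=> [z|x y nxy]; first by apply/andP; split; rewrite /h; case: ifP => _; lra.
  have [a [b [nab av bv aR bR]]] := no_twin_Rk_pair k0 lonely nxy.
  by apply: le_trans (ler_pair_sum h0 nab aR bR); rewrite !hv //; lra.
rewrite (bigD1 v) //= {1}/h eqxx add0r (eq_bigr (fun=> 2^-1)) => [|z]; last exact: hv.
rewrite sumr_const cardC1.
case: #|T| (max_card [set v]) => [|n _]; first by rewrite cards1.
by rewrite [n.+1.-1]/= -(mulr_natr _ n) (mulrSr 1 n); lra.
Qed.

End Resolving.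

Theorem corollary2p9 (R : realFieldType) (T : finType) (e : rel T) (k : nat) :
  simple_graph e -> connected_graph e -> (2 <= #|T|)%N -> (0 < k)%N ->
  (@is_dim_kf T e R k ((#|T|)%:R / 2)%R <-> in_blowup_family e).
Proof.
move=> [esym eirr] conn _ k0.
split=> [[_ dim_min]|[U [eH [f [b [_ [_ [fib2 edges]]]]]]]].
  apply: twins_blowup => // v.
  case: (pickP [pred y | (y != v) && twins e v y]) => [y /andP[yv tvy]|lonely].
    by exists y.
  have no_twin y : y != v -> ~~ twins e v y.
    by move=> yv; apply/negP => tvy; move: (lonely y); rewrite /= yv tvy.
  have [h hR hlt] := no_twin_resolving_lt R k0 no_twin.
  by have := dim_min h hR; rewrite leNgt hlt.
have fibre_twins x y : f x = f y -> twins e x y.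
  move=> fxy; apply/twinsP => w wx wy.
  by rewrite (edges x w) 1?eq_sym // (edges y w) 1?eq_sym // fxy.
split=> [|h hR].
  exists (fun=> 2^-1); split; first exact: half_k_trunc_resolving.
  by rewrite sumr_const -(mulr_natr 2^-1) mulrC.
apply: (half_card_le_sum_fibres fib2) => x y nxy fxy.
exact: (twins_resolving_ge1 eirr hR nxy (fibre_twins x y fxy)).
Qed.
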